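(* Assume Assumption 1, Assumption 2 and the null hypothesis $H_0:\ T_i(1)=T_i(0)$ for all $i$, and condition on $\boldsymbol{T}(1),\boldsymbol{T}(0)$. Then for every unit $i$ and time $t$, $$\mathbb{E}\{Z_i\mathbb{1}(W_i\ge t)\mid\boldsymbol{T}(1),\boldsymbol{T}(0),\mathbb{1}(W_i\ge t),\Delta_i\mathbb{1}(W_i=t)\}=\mathbb{E}\{Z_i\mathbb{1}(W_i\ge t)\mid\boldsymbol{T}(1),\boldsymbol{T}(0),\mathbb{1}(W_i\ge t)\}=\mathbb{1}(W_i\ge t)\,\phi(t).$$
   Context: There are $n$ units. Unit $i$ has potential event times $T_i(1),T_i(0)\ge 0$, potential censoring times $C_i(1),C_i(0)\in[0,\infty]$, and treatment indicator $Z_i\in\{0,1\}$; bold letters denote $n$-vectors. Assumption 1: conditional on $\boldsymbol{T}(1),\boldsymbol{T}(0),\boldsymbol{C}(1),\boldsymbol{C}(0)$, the $Z_i$ are i.i.d. Bernoulli$(p_1)$, $p_1=1-p_0\in(0,1)$. Assumption 2: $(\boldsymbol{C}(1),\boldsymbol{C}(0))$ is independent of $(\boldsymbol{T}(1),\boldsymbol{T}(0))$ and the pairs $(C_i(1),C_i(0))$ are i.i.d. across $i$. $G_z(c)=\Pr(C_i(z)\ge c)$, $\phi(t)=p_1G_1(t)/\{p_1G_1(t)+p_0G_0(t)\}$. Realized: $T_i=Z_iT_i(1)+(1-Z_i)T_i(0)$, $C_i=Z_iC_i(1)+(1-Z_i)C_i(0)$, $W_i=\min\{T_i,C_i\}$,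 $\Delta_i=\mathbb{1}(T_i\le C_i)$. *)

From HB Require Import structures.
From mathcomp Require Import all_boot all_order all_algebra.
From mathcomp Require Import all_classical all_reals all_analysis.
From mathcomp Require Import measurable_realfun.

Set Implicit Arguments.
Unset Strict Implicit.
Unset Printing Implicit Defensive.

Import Order.TTheory GRing.Theory Num.Theory.

Local Open Scope classical_set_scope.
Local Open Scope ring_scope.

Definition realized_T {R : realType} {Omega : Type}
  (Z : Omega -> R) (t1 t0 : R) : Omega -> R :=
  fun w => Z w * t1 + (1 - Z w) * t0.

(* Realized censoring time C_i = Z_i C_i(1) + (1 - Z_i) C_i(0), in [0,+oo]
   (mathcomp convention 0 * +oo = 0). *)
Definition realized_C {R : realType} {Omega : Type}
  (Z : Omega -> R) (C1 C0 : Omega -> \bar R) : Omega -> \bar R :=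
  fun w => ((Z w)%:E * C1 w + (1 - Z w)%:E * C0 w)%E.

Definition obs_W {R : realType} {Omega : Type}
  (T : Omega -> R) (C : Omega -> \bar R) : Omega -> \bar R :=
  fun w => Order.min (T w)%:E (C w).

Definition obs_Delta {R : realType} {Omega : Type}
  (T : Omega -> R) (C : Omega -> \bar R) : Omega -> bool :=
  fun w => ((T w)%:E <= C w)%E.

(* Mutual independence of Z_1,...,Z_n,(C_1(1),C_1(0)),...,(C_n(1),C_n(0)),
   stated on the generating pi-system of measurable rectangles. *)
Definition indep_Z_Cpairs {d} {Omega : measurableType d} {R : realType}
  (P : probability Omega R) (n : nat)
  (Z : 'I_n -> Omega -> R) (C1 C0 : 'I_n -> Omega -> \bar R) : Prop :=
  forall (A : 'I_n -> set R) (B D : 'I_n -> set (\bar R)),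
    (forall i, measurable (A i)) -> (forall i, measurable (B i)) ->
    (forall i, measurable (D i)) ->
    P (\bigcap_(i in [set: 'I_n])
         (Z i @^-1` A i `&` (C1 i @^-1` B i `&` C0 i @^-1` D i))) =
    (\prod_(i < n) (P (Z i @^-1` A i) * P (C1 i @^-1` B i `&` C0 i @^-1` D i)))%E.

Definition ident_distr_Cpairs {d} {Omega : measurableType d} {R : realType}
  (P : probability Omega R) (n : nat) (C1 C0 : 'I_n -> Omega -> \bar R) : Prop :=
  forall (i j : 'I_n) (B D : set (\bar R)), measurable B -> measurable D ->
    P (C1 i @^-1` B `&` C0 i @^-1` D) = P (C1 j @^-1` B `&` C0 j @^-1` D).

Definition Gsurv {d} {Omega : measurableType d} {R : realType}
  (P : probability Omega R) (C : Omega -> \bar R) (c : R) : R :=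
  fine (P [set w | (c%:E <= C w)%E]).

Definition phi {R : realType} (p1 G1t G0t : R) : R :=
  p1 * G1t / (p1 * G1t + (1 - p1) * G0t).

(* g is a version of E[X | sigma(Y)] for a finitely-valued Y:
   g is a function of Y and E[X 1{Y in B}] = E[g 1{Y in B}] for every B. *)
Definition cond_exp_version {d} {Omega : measurableType d} {R : realType}
  (P : probability Omega R) {V : finType}
  (X : Omega -> R) (Y : Omega -> V) (g : Omega -> R) : Prop :=
  (exists h : V -> R, forall w, g w = h (Y w)) /\
  forall B : {set V},
    (\int[P]_(w in Y @^-1` [set v | v \in B]) (X w)%:E =
     \int[P]_(w in Y @^-1` [set v | v \in B]) (g w)%:E)%E.

From HB Require Import structures.
From mathcomp Require Import all_boot all_order all_algebra.
From mathcomp Require Import all_classical all_reals all_analysis.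
From mathcomp Require Import measurable_realfun.
From mathcomp Require Import lra.
Set Implicit Arguments.
Unset Strict Implicit.
Unset Printing Implicit Defensive.

Import Order.TTheory GRing.Theory Num.Theory.
Local Open Scope classical_set_scope.
Local Open Scope ring_scope.

(* Under H0 the event time T_i is a constant c, so W_i >= t is the event
   K = {t <= c, C_i >= t}, and Delta_i 1(W_i = t) equals 1(c = t) 1_K; both
   conditioning variables are therefore functions of 1_K.  Conditioning on a
   function of 1_K, the indicator of E = {Z_i = 1} /\ K has the version
   P(E)/P(K) 1_K.  When t <= c, independence of Z_i from (C_i(1), C_i(0))
   gives P(E) = p1 G1(t) and P(K) = p1 G1(t) + p0 G0(t), whose ratio is
   phi(t); when t > c both events are empty. *)

Lemma preimage_mem_pred (T : Type) (K : set T) (q : pred bool) :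
  [set w | q (w \in K)] =
  (if q true then K else set0) `|` (if q false then ~` K else set0).
Proof.
apply/seteqP; split => w /=; case: (boolP (w \in K)) => [/set_mem Kw|/negP wNK].
- by move=> ->; left.
- by move=> ->; right => /mem_set.
- by case; case: (q true) => //; case: (q false).
- case=> [|]; first by case: (q true) => [/mem_set/wNK []|[]].
  by case: (q false) => [|[]].
Qed.

Lemma measurable_mem_pred d (Omega : measurableType d) (K : set Omega) (q : pred bool) :
  measurable K -> measurable [set w | q (w \in K)].
Proof.
move=> mK; rewrite preimage_mem_pred.
by apply: measurableU; case: ifP => // _; exact: measurableC.
Qed.

Lemma cond_exp_version_indic d (Omega : measurableType d) (R : realType)
    (P : probability Omega R) (V : finType) (Y : Omega -> V) (f : bool -> V)
    (pi : V -> bool) (E K : set Omega) (c : R) :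
  measurable E -> measurable K -> E `<=` K -> P E = (c%:E * P K)%E ->
  cancel f pi -> (forall w, Y w = f (w \in K)) ->
  cond_exp_version P (fun w => \1_E w) Y (fun w => c * \1_K w).
Proof.
move=> mE mK EK PE fK Yf; split.
  by exists (fun v => c * (pi v)%:R) => w; rewrite Yf fK indicE.
move=> B; have -> : Y @^-1` [set v | v \in B] = [set w | f (w \in K) \in B].
  by apply/funext => w; rewrite /preimage /= Yf.
have mS := measurable_mem_pred (fun b => f b \in B) mK.
set S := [set w | _] in mS *.
under [in RHS]eq_integral do rewrite EFinM.
rewrite integralZl //; last exact: integrableS (integrable_indic P mK).
rewrite !integral_indic //.
have [fB|fNB] := boolP (f true \in B).
  have KS : K `<=` S by move=> w /mem_set wK; rewrite /S /= wK.
  by rewrite !setIidl //; exact: subset_trans EK KS.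
have KS0 : K `&` S = set0.
  by rewrite -subset0 => w [/mem_set wK]; rewrite /S /= wK (negbTE fNB).
have ES0 : E `&` S = set0 by rewrite -subset0 -KS0; exact: setSI.
by rewrite KS0 ES0 !measure0 mule0.
Qed.

Definition at_risk {R : realType} {Omega : Type} (C : Omega -> \bar R) (t : R) :
  set Omega := [set w | (t%:E <= C w)%E].

Lemma mem_at_risk (R : realType) (Omega : Type) (C : Omega -> \bar R) t w :
  (w \in at_risk C t) = (t%:E <= C w)%E.
Proof. by apply/idP/idP => [/set_mem|/mem_set]. Qed.

Lemma emeasurable_ge (R : realType) (t : R) :
  measurable [set x : \bar R | (t%:E <= x)%E].
Proof.
have -> : [set x : \bar R | (t%:E <= x)%E] = [set` `[t%:E, +oo[].
  by apply/funext => x; rewrite /= in_itv /= andbT.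
exact: emeasurable_itv.
Qed.

Lemma measurable_at_risk d (Omega : measurableType d) (R : realType)
    (C : Omega -> \bar R) t :
  measurable_fun setT C -> measurable (at_risk C t).
Proof. by move=> mC; have := mC measurableT _ (emeasurable_ge t); rewrite setTI. Qed.

Lemma prob_at_risk d (Omega : measurableType d) (R : realType)
    (P : probability Omega R) (C : Omega -> \bar R) t :
  measurable_fun setT C -> P (at_risk C t) = (Gsurv P C t)%:E.
Proof. by move=> mC; rewrite /Gsurv fineK // fin_num_measure //; exact: measurable_at_risk. Qed.

Lemma indep_Z_Cpairs_unit d (Omega : measurableType d) (R : realType)
    (P : probability Omega R) n (Z : 'I_n -> Omega -> R)
    (C1 C0 : 'I_n -> Omega -> \bar R) (i : 'I_n) (A : set R) (B D : set (\bar R)) :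
  indep_Z_Cpairs P Z C1 C0 -> measurable A -> measurable B -> measurable D ->
  P (Z i @^-1` A `&` (C1 i @^-1` B `&` C0 i @^-1` D)) =
  (P (Z i @^-1` A) * P (C1 i @^-1` B `&` C0 i @^-1` D))%E.
Proof.
move=> indep mA mB mD.
pose only_i (U : Type) (X : set U) (j : 'I_n) := if j == i then X else setT.
have monly_i dU (U : measurableType dU) (X : set U) j :
    measurable X -> measurable (only_i U X j).
  by rewrite /only_i; case: ifP.
have := indep (only_i _ A) (only_i _ B) (only_i _ D) (monly_i _ _ _ ^~ mA)
  (monly_i _ _ _ ^~ mB) (monly_i _ _ _ ^~ mD).
rewrite (bigD1 i) //= big1 => [|j /negbTE ji]; last first.
  by rewrite /only_i ji !preimage_setT setIT !probability_setT mule1.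
rewrite /only_i eqxx mule1 => <-; congr (P _); apply/seteqP; split => w.
  by move=> Aw j _ /=; case: eqP => [->|].
by move=> /(_ i I); rewrite /= eqxx.
Qed.

(* Also when a + b = 0, since then a = 0 (and x / 0 = 0). *)
Lemma ratio_sum_mul (R : realFieldType) (a b : R) :
  0 <= a -> 0 <= b -> a / (a + b) * (a + b) = a.
Proof.
move=> a0 b0; have [ab0|ab_neq0] := eqVneq (a + b) 0; last by rewrite divfK.
by rewrite ab0 mulr0; lra.
Qed.

Section realized_censoring.
Variables (d : measure_display) (Omega : measurableType d) (R : realType).
Variables (P : probability Omega R) (p1 t : R).
Variables (Z : Omega -> R) (C1 C0 : Omega -> \bar R).
Hypothesis Z01 : forall w, Z w = 0 \/ Z w = 1.

Lemma indic_treated w : \1_(Z @^-1` [set 1]) w = Z w.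
Proof.
rewrite indicE; case: (Z01 w) => Zw; rewrite Zw.
  by rewrite memNset //= Zw => /eqP; rewrite eq_sym oner_eq0.
by rewrite mem_set.
Qed.

Let C := realized_C Z C1 C0.

Lemma realized_C_treated w : Z w = 1 -> C w = C1 w.
Proof. by move=> Zw; rewrite /C /realized_C Zw subrr mul1e mul0e adde0. Qed.

Lemma realized_C_control w : Z w = 0 -> C w = C0 w.
Proof. by move=> Zw; rewrite /C /realized_C Zw subr0 mul1e mul0e add0e. Qed.

Lemma control_setC : Z @^-1` [set 0] = ~` (Z @^-1` [set 1]).
Proof.
apply/seteqP; split => w /=; case: (Z01 w) => ->.
- by move=> _ /eqP; rewrite eq_sym oner_eq0.
- by move=> /eqP; rewrite oner_eq0.
- by [].
- by move=> /(_ erefl).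
Qed.

Lemma at_risk_realized :
  at_risk C t = Z @^-1` [set 1] `&` at_risk C1 t `|` Z @^-1` [set 0] `&` at_risk C0 t.
Proof.
apply/seteqP; split => w.
  rewrite /at_risk /=; case: (Z01 w) => Zw.
    by rewrite realized_C_control // => ?; right.
  by rewrite realized_C_treated // => ?; left.
rewrite /at_risk /= => -[] [Zw].
  by rewrite realized_C_treated.
by rewrite realized_C_control.
Qed.

Lemma treated_at_risk_realized :
  Z @^-1` [set 1] `&` at_risk C t = Z @^-1` [set 1] `&` at_risk C1 t.
Proof.
apply/seteqP; split => w [Zw]; rewrite /at_risk /= realized_C_treated //.
Qed.

Hypotheses (mZ : measurable_fun setT Z).
Hypotheses (mC1 : measurable_fun setT C1) (mC0 : measurable_fun setT C0).
Hypothesis PZ1 : P (Z @^-1` [set 1]) = p1%:E.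
Hypothesis indepZC : forall A B D, measurable A -> measurable B -> measurable D ->
  P (Z @^-1` A `&` (C1 @^-1` B `&` C0 @^-1` D)) =
  (P (Z @^-1` A) * P (C1 @^-1` B `&` C0 @^-1` D))%E.

Let mZ_set1 r : measurable (Z @^-1` [set r]).
Proof. by rewrite -[_ @^-1` _]setTI; apply: mZ => //; exact: measurable_set1. Qed.

Lemma measurable_at_risk_realized : measurable (at_risk C t).
Proof.
by rewrite at_risk_realized; apply: measurableU; apply: measurableI => //;
  exact: measurable_at_risk.
Qed.

Lemma prob_treated_at_risk :
  P (Z @^-1` [set 1] `&` at_risk C1 t) = (p1 * Gsurv P C1 t)%:E.
Proof.
have := indepZC (measurable_set1 (1 : R)) (emeasurable_ge t) measurableT.
rewrite preimage_setT setIT => indep1.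
by rewrite EFinM -PZ1 -(prob_at_risk P t mC1); exact: indep1.
Qed.

Lemma prob_control_at_risk :
  P (Z @^-1` [set 0] `&` at_risk C0 t) = ((1 - p1) * Gsurv P C0 t)%:E.
Proof.
have := indepZC (measurable_set1 (0 : R)) measurableT (emeasurable_ge t).
rewrite preimage_setT setTI => indep0.
rewrite EFinM EFinB -PZ1 -(probability_setC P (mZ_set1 1)) -control_setC.
by rewrite -(prob_at_risk P t mC0); exact: indep0.
Qed.

Lemma prob_at_risk_realized :
  P (at_risk C t) = (p1 * Gsurv P C1 t + (1 - p1) * Gsurv P C0 t)%:E.
Proof.
rewrite EFinD -prob_treated_at_risk -prob_control_at_risk at_risk_realized.
apply: measureU.
- by apply: measurableI => //; exact: measurable_at_risk.
- by apply: measurableI => //; exact: measurable_at_risk.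
- by rewrite control_setC -subset0 => w [[Z1w _] []].
Qed.

Lemma prob_treated_at_risk_realized :
  P (Z @^-1` [set 1] `&` at_risk C t) =
  ((phi p1 (Gsurv P C1 t) (Gsurv P C0 t))%:E * P (at_risk C t))%E.
Proof.
have treated_ge0 : 0 <= p1 * Gsurv P C1 t.
  by rewrite -lee_fin -prob_treated_at_risk measure_ge0.
have control_ge0 : 0 <= (1 - p1) * Gsurv P C0 t.
  by rewrite -lee_fin -prob_control_at_risk measure_ge0.
rewrite treated_at_risk_realized prob_treated_at_risk prob_at_risk_realized.
by rewrite -EFinM /phi ratio_sum_mul.
Qed.

End realized_censoring.

Lemma realized_T_same (R : realType) (Omega : Type) (Z : Omega -> R) (c : R) :
  realized_T Z c c = fun=> c.
Proof. by apply/funext => w; rewrite /realized_T -mulrDl addrC subrK mul1r. Qed.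

Section constant_event_time.
Variables (R : realType) (Omega : Type) (c t : R) (C : Omega -> \bar R).

Let W := obs_W (fun=> c) C.

Lemma at_risk_obs_W : at_risk W t = if t <= c then at_risk C t else set0.
Proof.
apply/seteqP; split => w; rewrite /at_risk /W /obs_W /= le_min lee_fin;
  by case: ifP.
Qed.

Lemma obs_Delta_at w :
  obs_Delta (fun=> c) C w && (W w == t%:E) = (c == t) && (w \in at_risk W t).
Proof.
rewrite mem_at_risk /obs_Delta /W /obs_W.
case: leP => [cC|Cc]; first by rewrite eqe; case: eqP => //= ->; rewrite lexx.
by rewrite andFb; case: (c =P t) => //= <-; rewrite leNgt Cc.
Qed.

End constant_event_time.

Theorem lemmaA1 (d : measure_display) (Omega : measurableType d) (R : realType)
  (P : probability Omega R) (n : nat) (p1 : R)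
  (T1 T0 : 'I_n -> R) (C1 C0 : 'I_n -> Omega -> \bar R) (Z : 'I_n -> Omega -> R) :
  0 < p1 < 1 ->
  (* potential event times (conditioned on, hence fixed) *)
  (forall i, 0 <= T1 i) -> (forall i, 0 <= T0 i) ->
  (* potential censoring times in [0, +oo] *)
  (forall i, measurable_fun setT (C1 i)) -> (forall i, measurable_fun setT (C0 i)) ->
  (forall i w, (0 <= C1 i w)%E) -> (forall i w, (0 <= C0 i w)%E) ->
  (* Assumption 1: Z_i i.i.d. Bernoulli(p1), independent of the censoring times *)
  (forall i, measurable_fun setT (Z i)) ->
  (forall i w, Z i w = 0 \/ Z i w = 1) ->
  (forall i, P (Z i @^-1` [set 1]) = p1%:E) ->
  indep_Z_Cpairs P Z C1 C0 ->
  (* Assumption 2: censoring pairs i.i.d. across units *)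
  ident_distr_Cpairs P C1 C0 ->
  (* null hypothesis H0 *)
  (forall i, T1 i = T0 i) ->
  forall (i : 'I_n) (t : R),
    let T := realized_T (Z i) (T1 i) (T0 i) in
    let C := realized_C (Z i) (C1 i) (C0 i) in
    let W := obs_W T C in
    let Delta := obs_Delta T C in
    let X := fun w => Z i w * ((t%:E <= W w)%E)%:R in
    let g := fun w => ((t%:E <= W w)%E)%:R *
                      phi p1 (Gsurv P (C1 i) t) (Gsurv P (C0 i) t) in
    cond_exp_version P X
      (fun w => ((t%:E <= W w)%E, Delta w && (W w == t%:E))) g /\
    cond_exp_version P X (fun w => (t%:E <= W w)%E) g.
Proof.
move=> _ _ _ mC1 mC0 _ _ mZ Z01 PZ1 indep _ H0 i t.
rewrite -H0 realized_T_same => T C W Delta X g.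
set K := at_risk W t.
have memK w : (t%:E <= W w)%E = (w \in K) by rewrite mem_at_risk.
have [mK PE] : measurable K /\
    P (Z i @^-1` [set 1] `&` K) = ((phi p1 (Gsurv P (C1 i) t) (Gsurv P (C0 i) t))%:E * P K)%E.
  rewrite /K at_risk_obs_W; case: ifP => _; last by rewrite setI0 !measure0 mule0.
  split; first exact: measurable_at_risk_realized.
  apply: prob_treated_at_risk_realized => // A B D mA mB mD.
  exact: indep_Z_Cpairs_unit.
have -> : X = (fun w => \1_(Z i @^-1` [set 1] `&` K) w).
  by apply/funext => w; rewrite /X memK indicI /= indic_treated // indicE.
have -> : g = (fun w => phi p1 (Gsurv P (C1 i) t) (Gsurv P (C0 i) t) * \1_K w).
  by apply/funext => w; rewrite /g memK indicE mulrC.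
have mE : measurable (Z i @^-1` [set 1] `&` K).
  by apply: measurableI => //; rewrite -[_ @^-1` _]setTI; apply: mZ.
split.
  apply: (cond_exp_version_indic (f := fun b => (b, (T1 i == t) && b)) (pi := fst)) => //.
  by move=> w; rewrite memK obs_Delta_at.
by apply: (cond_exp_version_indic (f := id) (pi := id)) => // w; rewrite memK.
Qed.
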